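(* Let $P$ be an irreducible semi-isotropic transition matrix on $\mathbb T=\mathbb T_q$ with Martin kernel $K(x,y)=G(x,y)/G(o,y)$. If $(y_n)$ is a sequence in $\mathbb T$ converging to the end $\omega$ in the end compactification and such that $K(x,y_n)\to h(x)$ for every $x\in\mathbb T$, then $h$ depends only on $\mathrm{hor}(x)$: there is a $\tilde P$-superharmonic function $f$ on $\mathbb Z$ with $h(x)=f(\mathrm{hor}(x))$ for all $x\in\mathbb T$.
   Context: Tree notation: $\mathbb T=\mathbb T_q$ ($q\ge2$) is the homogeneous tree of degree $q+1$ with graph metric $d$, a fixed end $\omega$ and a root $o$. Each vertex $x$ has a unique neighbour $x^-$ (its predecessor) on the geodesic ray from $x$ to $\omega$. $\mathrm{hor}(o)=0$, $\mathrm{hor}(x)=\mathrm{hor}(x^-)+1$. Ancestors of $x$: $x,x^-,(x^-)^-,\dots$; $x\curlywedge y$ is the common ancestor of $x,y$ with maximal $\mathrm{hor}$; $\mathrm{up}(x,y)=\mathrm{hor}(x)-\mathrm{hor}(x\curlywedge y)$. $P$ semi-isotropic: $p(x,y)$ depends only on $(\mathrm{up}(x,y),\mathrm{up}(y,x))$; irreducible such $P$ is transient, with Green kernel $G(x,y)=\sum_{n\ge0}p^{(n)}(x,y)<\infty$. $\tilde\mu(n)=\sum_{y:\mathrm{hor}(y)-\mathrm{hor}(x)=n}p(x,y)$ (independent of $x$), and $\tilde P$ is the transition matrix on $\mathbb Z$ with $\tilde p(k,l)=\tilde\mu(l-k)$. $f$ is $\tilde P$-superharmonic if $f\ge\tilde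 Pf$. *)

From HB Require Import structures.
From mathcomp Require Import all_boot all_order all_algebra.
From mathcomp Require Import all_classical all_reals all_analysis.
Set Implicit Arguments. Unset Strict Implicit. Unset Printing Implicit Defensive.
Import Order.TTheory GRing.Theory Num.Theory.
Local Open Scope ring_scope.

(* The homogeneous tree T_q with a fixed end omega and root o is encoded by
   its predecessor map  pred : V -> V  (x |-> x^-), horocycle index hor and
   root o.  The tree is the graph with edges {x, pred x}. *)
Definition is_tree_q (q : nat) (V : choiceType) (pred : V -> V) (hor : V -> int)
    (o : V) : Prop :=
  [/\ hor o = 0,
      (forall x, hor x = hor (pred x) + 1),
      (forall x, exists c : 'I_q -> V,
          [/\ injective c, (forall i, pred (c i) = x) &
              (forall y, pred y = x -> exists i, y = c i)]) &
      (forall x y, exists m n, iter m pred x = iter n pred y)].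

Definition anc (V : choiceType) (pred : V -> V) (x c : V) : Prop :=
  exists n, iter n pred x = c.

Definition is_conf (V : choiceType) (pred : V -> V) (hor : V -> int) (x y c : V) :=
  [/\ anc pred x c, anc pred y c &
      forall c', anc pred x c' -> anc pred y c' -> hor c' <= hor c].

Definition semi_isotropic (R : realType) (V : choiceType) (pred : V -> V)
    (hor : V -> int) (p : V -> V -> R) : Prop :=
  forall x y x' y' c c', is_conf pred hor x y c -> is_conf pred hor x' y' c' ->
    hor x - hor c = hor x' - hor c' -> hor y - hor c = hor y' - hor c' ->
    p x y = p x' y'.

Definition transition_matrix (R : realType) (V : choiceType) (p : V -> V -> R) :=
  (forall x y, 0 <= p x y) /\
  (forall x, (\esum_(y in [set: V]) (p x y)%:E = 1)%E).

Fixpoint pn (R : realType) (V : choiceType) (p : V -> V -> R) (n : nat)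
    (x y : V) : \bar R :=
  match n with
  | 0 => if `[< x = y >] then 1%E else 0%E
  | n'.+1 => \esum_(z in [set: V]) ((p x z)%:E * pn p n' z y)%E
  end.

Definition irreducible (R : realType) (V : choiceType) (p : V -> V -> R) :=
  forall x y, exists n, (0 < pn p n x y)%E.

Definition green (R : realType) (V : choiceType) (p : V -> V -> R) (x y : V)
  : \bar R := \esum_(n in [set: nat]) pn p n x y.

(* Martin kernel K(x,y) = G(x,y)/G(o,y) (G is finite: P is transient) *)
Definition martin (R : realType) (V : choiceType) (p : V -> V -> R) (o x y : V)
  : R := fine (green p x y) / fine (green p o y).

(* y_n -> omega in the end compactification: for every k, eventually the
   geodesic ray from y_n to omega avoids o_k = iter k pred o, i.e. o_k is not
   an ancestor of y_n (these sets form a neighbourhood basis of omega). *)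
Definition conv_to_end (V : choiceType) (pred : V -> V) (o : V) (y : nat -> V) :=
  forall k : nat, exists N : nat, forall n, (N <= n)%N ->
    ~ anc pred (y n) (iter k pred o).

Definition mu_tilde (R : realType) (V : choiceType) (hor : V -> int)
    (p : V -> V -> R) (o : V) (n : int) : \bar R :=
  \esum_(y in [set y | hor y - hor o = n]) (p o y)%:E.

Definition tilde_superharmonic (R : realType) (V : choiceType) (hor : V -> int)
    (p : V -> V -> R) (o : V) (f : int -> R) :=
  forall k : int,
    (\esum_(l in [set: int]) (mu_tilde hor p o (l - k) * (f l)%:E)
       <= (f k)%:E)%E.

From HB Require Import structures.
From mathcomp Require Import all_boot all_order all_algebra.
From mathcomp Require Import all_classical all_reals all_analysis.
From mathcomp Require Import zify fingroup perm finmap.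
Import Order.TTheory GRing.Theory Num.Theory.
Import numFieldNormedType.Exports.
Local Open Scope ring_scope.
Local Open Scope classical_set_scope.

(* Semi-isotropy makes P, hence the Green kernel and the Martin kernel, invariant
   under every automorphism of the tree that fixes the end omega.  If
   hor x = hor x', some such automorphism swaps x and x' and fixes every vertex
   outside the subtree below their confluent; as y_n -> omega, eventually y_n
   lies outside that subtree, so K(x, y_n) = K(x', y_n) and h(x) = h(x').  Thus
   h = f o hor.  The superharmonicity of G(., y) passes to h through finite
   partial sums, and transporting it from a vertex of level k to o by an
   automorphism shifting the levels by -k gives f >= P~ f. *)

Set Implicit Arguments. Unset Strict Implicit.

Section NonnegativeEsum.
Local Open Scope ereal_scope.
Variables (R : realType) (T : choiceType).
Implicit Types (a : T -> \bar R) (A B : set T).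

Lemma esumZl A a r : (0 <= r)%R -> (forall i, 0 <= a i) ->
  \esum_(i in A) r%:E * a i = r%:E * \esum_(i in A) a i.
Proof.
move=> r0 a0.
have sumZl F : finite_set F -> \sum_(i \in F) r%:E * a i = r%:E * \sum_(i \in F) a i.
  by move=> finF; rewrite !fsbig_finite //= ge0_sume_distrr.
rewrite /esum -ereal_supZl //; last first.
  by apply/set0P; exists 0; exists set0; [exact: fsets_set0|rewrite fsbig_set0].
congr ereal_sup; apply/seteqP; split => x /=.
  move=> [F [finF FA] <-]; exists (\sum_(i \in F) a i); first by exists F.
  by rewrite sumZl.
by move=> [_ [F [finF FA] <-] <-]; exists F => //; rewrite sumZl.
Qed.

Lemma subset_esum A B a : A `<=` B -> (forall i, 0 <= a i) ->
  \esum_(i in A) a i <= \esum_(i in B) a i.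
Proof.
move=> AB a0; rewrite esum_mkcond [X in _ <= X]esum_mkcond.
apply: le_esum => i _; case: ifP => iA; last by case: ifP.
by rewrite (mem_set (AB _ (set_mem iA))).
Qed.

Lemma le_term_esum A a t : A t -> (forall i, 0 <= a i) ->
  a t <= \esum_(i in A) a i.
Proof. by move=> At a0; rewrite -esum_set1 //; apply: subset_esum => // i ->. Qed.

Lemma esumC (T' : choiceType) (a : T -> T' -> \bar R) :
  (forall i j, 0 <= a i j) ->
  \esum_(i in [set: T]) \esum_(j in [set: T']) a i j =
  \esum_(j in [set: T']) \esum_(i in [set: T]) a i j.
Proof.
move=> a0; rewrite !esum_esum //.
rewrite (reindex_esum ([set: T'] `*`` (fun _ => [set: T])) _ (fun x => (x.2, x.1))) //.
split=> //=.
- by move=> [i1 i2] [j1 j2] /= _ _ [] -> ->.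
- by move=> [i1 i2] _ /=; exists (i2, i1).
Qed.

End NonnegativeEsum.

Section GreenKernel.
Local Open Scope ereal_scope.
Variables (R : realType) (V : choiceType) (p : V -> V -> R).
Hypothesis HP : transition_matrix p.

Lemma p_ge0 x y : (0 <= p x y)%R.
Proof. by case: HP. Qed.

Lemma pn_ge0 n x y : 0 <= pn p n x y.
Proof.
elim: n x y => [|n IH] x y /=; first by case: ifP.
by apply: esum_ge0 => z _; apply: mule_ge0 => //; rewrite lee_fin p_ge0.
Qed.

Lemma green_ge0 x y : 0 <= green p x y.
Proof. by apply: esum_ge0 => n _; apply: pn_ge0. Qed.

Lemma green_superharmonic x y :
  \esum_(z in [set: V]) (p x z)%:E * green p z y <= green p x y.
Proof.
rewrite (eq_esum (b := fun z => \esum_(n in [set: nat]) (p x z)%:E * pn p n z y));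
  last by move=> z _; rewrite /green esumZl ?p_ge0 // => n; apply: pn_ge0.
rewrite esumC; last by move=> z n; apply: mule_ge0; rewrite ?lee_fin ?p_ge0 ?pn_ge0.
have -> : \esum_(n in [set: nat]) \esum_(z in [set: V]) (p x z)%:E * pn p n z y
   = \esum_(n in [set: nat]) pn p n.+1 x y by [].
rewrite -(esum_image [set: nat] S (fun m => pn p m x y)); last by move=> a b _ _ [].
by apply: subset_esum => // n; apply: pn_ge0.
Qed.

Lemma green_ge_step x z y : (p x z)%:E * green p z y <= green p x y.
Proof.
apply: le_trans (green_superharmonic x y).
apply: (le_term_esum (a := fun z => (p x z)%:E * green p z y)) => // w.
by apply: mule_ge0; rewrite ?lee_fin ?p_ge0 ?green_ge0.
Qed.

Hypothesis Hirr : irreducible p.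

Lemma green_pinfty_propagates x y w : green p x y = +oo -> green p w y = +oo.
Proof.
move=> Gx; have [m Hm] := Hirr w x.
elim: m w Hm => [|m IH] w /=.
  by case: asboolP => [->|] //; rewrite ltxx.
move=> Hm.
have [z Hz] : exists z, 0 < (p w z)%:E * pn p m z x.
  apply: contrapT => H; move: Hm; rewrite esum1 ?ltxx // => z _.
  apply/eqP; rewrite eq_le; apply/andP; split; last first.
    by apply: mule_ge0; rewrite ?lee_fin ?p_ge0 ?pn_ge0.
  by rewrite leNgt; apply/negP => H'; apply: H; exists z.
have pz : (0 < p w z)%R.
  rewrite lt_def p_ge0 andbT; apply/negP => /eqP e; move: Hz.
  by rewrite e mul0e ltxx.
have pnz : 0 < pn p m z x.
  rewrite lt_def pn_ge0 andbT; apply/negP => /eqP e; move: Hz.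
  by rewrite e mule0 ltxx.
have := green_ge_step w z y; rewrite (IH _ pnz) gt0_muley ?lte_fin //.
by rewrite leye_eq => /eqP.
Qed.

End GreenKernel.

Lemma tree_q_children q (V : choiceType) (pred : V -> V) (hor : V -> int) (o : V) :
  is_tree_q q pred hor o ->
  exists (child : V -> 'I_q -> V) (branch : V -> 'I_q),
    [/\ forall x i, pred (child x i) = x, forall x, injective (child x) &
        forall v, child (pred v) (branch v) = v].
Proof.
case=> _ _ Hchildren _; have [child child_spec] := boolp.choice Hchildren.
have branch_ex v : exists i, v = child (pred v) i.
  by case: (child_spec (pred v)) => _ _ /(_ v erefl).
have [branch branch_spec] := boolp.choice branch_ex.
exists child, branch; split=> [x i|x|v]; last by rewrite -branch_spec.
  all: by case: (child_spec x).
Qed.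

Section Tree.
Variables (q : nat) (V : choiceType) (pred : V -> V) (hor : V -> int).
Variables (child : V -> 'I_q -> V) (branch : V -> 'I_q).
Hypothesis horE : forall x, hor x = hor (pred x) + 1.
Hypothesis pred_child : forall x i, pred (child x i) = x.
Hypothesis child_inj : forall x, injective (child x).
Hypothesis child_branch : forall v, child (pred v) (branch v) = v.
Hypothesis pred_connected : forall x y, exists m n, iter m pred x = iter n pred y.

Lemma branch_child x i : branch (child x i) = i.
Proof. by apply: (@child_inj x); have := child_branch (child x i); rewrite pred_child. Qed.

Lemma hor_pred x : hor (pred x) = hor x - 1.
Proof. by rewrite (horE x) addrK. Qed.

Lemma hor_child x i : hor (child x i) = hor x + 1.
Proof. by rewrite horE pred_child. Qed.

Lemma hor_iter_pred n x : hor (iter n pred x) = hor x - n%:Z.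
Proof.
elim: n => [|n IH]; first by rewrite subr0.
rewrite iterS hor_pred IH; lia.
Qed.

Lemma hor_surj (i0 : 'I_q) (o : V) k : exists v, hor v = hor o + k.
Proof.
case: k => n.
  exists (iter n (child^~ i0) o).
  by elim: n => [|n IH] /=; rewrite ?addr0 // hor_child IH; lia.
by exists (iter n.+1 pred o); rewrite hor_iter_pred NegzE; lia.
Qed.

Lemma not_anc_iter_pred c j : ~ anc pred (iter j.+1 pred c) c.
Proof. by move=> [n /(congr1 hor)]; rewrite -iterD hor_iter_pred; lia. Qed.

Lemma exists_conf x y : exists c, is_conf pred hor x y c.
Proof.
have [m [n H]] := pred_connected x y.
have ex : exists i, `[< anc pred y (iter i pred x) >].
  by exists m; apply/asboolP; exists n.
case: (ex_minnP ex) => i /asboolP Pi Hmin.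
exists (iter i pred x); split => //; first by exists i.
move=> c' [j Hj] Hy; rewrite -Hj !hor_iter_pred.
have : (i <= j)%N by apply: Hmin; apply/asboolP; rewrite Hj.
lia.
Qed.

Definition tree_aut (T : V -> V) (d : int) :=
  [/\ injective T, (forall z, exists v, T v = z),
      (forall v, pred (T v) = T (pred v)) & (forall v, hor (T v) = hor v + d)].

(* [relabel u u' pi] maps the ray from u towards omega onto the ray from u' and
   the child of index i of w to the child of index [pi w i] of the image of w;
   [relabel_at k m v] is this image computed from [iter m pred v = iter k pred u]. *)
Section Relabel.
Variables (u u' : V) (pi : V -> {perm 'I_q}).

Fixpoint relabel_at (k m : nat) (v : V) : V :=
  match m with
  | 0 => iter k pred u'
  | m'.+1 => child (relabel_at k m' (pred v)) (pi (pred v) (branch v))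
  end.

Lemma exists_meet_ray v : exists km : nat * nat, `[< iter km.1 pred v = iter km.2 pred u >].
Proof. by have [m [n H]] := pred_connected v u; exists (m, n); apply/asboolP. Qed.

Definition relabel v := let km := xchoose (exists_meet_ray v) in relabel_at km.2 km.1 v.

Lemma relabel_witness v :
  iter (xchoose (exists_meet_ray v)).1 pred v = iter (xchoose (exists_meet_ray v)).2 pred u.
Proof. exact/asboolP/(xchooseP (exists_meet_ray v)). Qed.

Lemma pred_relabel_at k m v : pred (relabel_at k m.+1 v) = relabel_at k m (pred v).
Proof. by rewrite /= pred_child. Qed.

Lemma hor_relabel_at k m v : hor (relabel_at k m v) = hor u' - k%:Z + m%:Z.
Proof.
elim: m v => [|m IH] v /=; first by rewrite hor_iter_pred addr0.
rewrite hor_child IH; lia.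
Qed.

Hypothesis pi_ray :
  forall j, pi (iter j.+1 pred u) (branch (iter j pred u)) = branch (iter j pred u').

Lemma relabel_at_ray t k : relabel_at (t + k) t (iter k pred u) = iter k pred u'.
Proof.
elim: t k => [|t IH] k //=.
by rewrite -iterS addSnnS IH pi_ray iterS child_branch.
Qed.

Lemma relabel_at_shift t k m v : iter m pred v = iter k pred u ->
  relabel_at (t + k) (t + m) v = relabel_at k m v.
Proof.
elim: m v => [|m IH] v; first by move=> /= ->; rewrite addn0 relabel_at_ray.
by rewrite iterSr => H; rewrite addnS /= IH.
Qed.

Lemma relabelE m k v : iter m pred v = iter k pred u -> relabel v = relabel_at k m v.
Proof.
move=> H; rewrite /relabel; have H0 := relabel_witness v.
move: (xchoose (exists_meet_ray v)) H0 => [m0 k0] /= H0.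
have h1 := congr1 hor H; have h0 := congr1 hor H0.
rewrite !hor_iter_pred in h1 h0.
have [le|le] := leqP m0 m.
  have -> : m = ((m - m0) + m0)%N by lia.
  have -> : k = ((m - m0) + k0)%N by lia.
  by rewrite relabel_at_shift.
have -> : m0 = ((m0 - m) + m)%N by lia.
have -> : k0 = ((m0 - m) + k)%N by lia.
by rewrite relabel_at_shift.
Qed.

Lemma relabel_child v : relabel v = child (relabel (pred v)) (pi (pred v) (branch v)).
Proof.
have H0 := relabel_witness (pred v).
move: (xchoose (exists_meet_ray (pred v))) H0 => [m k] /= H0.
by rewrite (relabelE H0) (@relabelE m.+1 k v) // iterSr.
Qed.

Lemma relabel_ray j : relabel (iter j pred u) = iter j pred u'.
Proof. by rewrite (@relabelE 0 j (iter j pred u)). Qed.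

Lemma relabel_at_inj k m v w :
  iter m pred v = iter k pred u -> iter m pred w = iter k pred u ->
  relabel_at k m v = relabel_at k m w -> v = w.
Proof.
elim: m v w => [|m IH] v w; first by move=> /= -> ->.
rewrite !iterSr => Hv Hw E.
have Ep : pred v = pred w by apply: IH => //; rewrite -!pred_relabel_at E.
move: E; rewrite /= Ep => /child_inj /perm_inj Hl.
by rewrite -(child_branch v) -(child_branch w) Ep Hl.
Qed.

Lemma relabel_tree_aut : tree_aut relabel (hor u' - hor u).
Proof.
have hor_relabel v : hor (relabel v) = hor v + (hor u' - hor u).
  have H0 := relabel_witness v.
  move: (xchoose (exists_meet_ray v)) H0 => [m k] /= H0.
  rewrite (relabelE H0) hor_relabel_at.
  have := congr1 hor H0; rewrite !hor_iter_pred; lia.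
split => //.
- move=> v w E.
  have Hv := relabel_witness v; have Hw := relabel_witness w.
  move: (xchoose (exists_meet_ray v)) Hv => [m1 k1] /= Hv.
  move: (xchoose (exists_meet_ray w)) Hw => [m2 k2] /= Hw.
  have hv := congr1 hor Hv; have hw := congr1 hor Hw.
  have hE := congr1 hor E; rewrite !hor_relabel in hE.
  rewrite !hor_iter_pred in hv hw.
  have Hv' : iter (k2 + m1) pred v = iter (k2 + k1) pred u by rewrite !iterD Hv.
  have Hw' : iter (k2 + m1) pred w = iter (k2 + k1) pred u.
    have -> : (k2 + m1 = k1 + m2)%N by lia.
    by rewrite iterD Hw -iterD addnC.
  by apply: (relabel_at_inj Hv' Hw'); rewrite -(relabelE Hv') -(relabelE Hw').
- move=> z; have [m [k H]] := pred_connected z u'.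
  elim: m z H => [|m IH] z; first by move=> /= ->; exists (iter k pred u); rewrite relabel_ray.
  rewrite iterSr => /IH [v0 Hv0].
  exists (child v0 ((pi v0)^-1%g (branch z))).
  by rewrite relabel_child pred_child branch_child permKV Hv0 child_branch.
- by move=> v; rewrite relabel_child pred_child.
Qed.

End Relabel.

(* At each ancestor w of x strictly below the confluent, [pi w] transposes the
   indices of the children of w towards x and towards x'; elsewhere it is the
   identity. *)
Lemma exists_aut_fixing_outside x x' m : iter m pred x = iter m pred x' ->
  exists T, [/\ tree_aut T 0, T x = x' &
    forall v, ~ anc pred v (iter m pred x) -> T v = v].
Proof.
move=> Hxx'; set c := iter m pred x.
pose jw (w : V) := (absz (hor x - hor w)).-1.
pose pi (w : V) : {perm 'I_q} :=
  if `[< exists j, (j < m)%N /\ w = iter j.+1 pred x >]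
  then tperm (branch (iter (jw w) pred x)) (branch (iter (jw w) pred x')) else 1%g.
have pi1 w : ~ anc pred w c -> pi w = 1%g.
  move=> Hw; rewrite /pi; case: asboolP => // -[j [jm Hj]].
  exfalso; apply: Hw; exists (m - j.+1)%N; rewrite Hj -iterD /c; congr iter; lia.
have pi_ray j : pi (iter j.+1 pred c) (branch (iter j pred c)) = branch (iter j pred c).
  by rewrite pi1 ?perm1 //; apply: not_anc_iter_pred.
have [TI TS TP TH] := relabel_tree_aut pi_ray.
exists (relabel c c pi); split.
- by split => // v; rewrite TH subrr.
- have up_to t : (t <= m)%N -> relabel c c pi (iter (m - t) pred x) = iter (m - t) pred x'.
    elim: t => [|t IH] tm; first by rewrite subn0 -/c (relabel_ray pi_ray 0) /= /c Hxx'.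
    have e : (m - t = (m - t.+1).+1)%N by lia.
    rewrite (relabel_child pi_ray) -iterS -e IH; last by lia.
    have -> : pi (iter (m - t) pred x) =
        tperm (branch (iter (m - t.+1) pred x)) (branch (iter (m - t.+1) pred x')).
      rewrite /pi; case: asboolP => [_|]; last first.
        by case; exists (m - t.+1)%N; split; [lia|rewrite e].
      rewrite /jw hor_iter_pred.
      by congr (tperm (branch (iter _ _ _)) (branch (iter _ _ _))); lia.
    by rewrite tpermL e iterS child_branch.
  by have := up_to m (leqnn m); rewrite subnn.
- move=> v Hv.
  have [mv [kv H]] := pred_connected v c.
  rewrite (relabelE pi_ray H).
  elim: mv v Hv H => [|mv IH] v Hv H; first by rewrite /= -H.
  have Hpv : ~ anc pred (pred v) c.
    by move=> [n Hn]; apply: Hv; exists n.+1; rewrite iterSr.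
  by rewrite /= IH -?iterSr // pi1 // perm1 child_branch.
Qed.

Lemma exists_aut_shift u u' : exists T, tree_aut T (hor u' - hor u) /\ T u = u'.
Proof.
pose jw (w : V) := (absz (hor u - hor w)).-1.
pose pi (w : V) : {perm 'I_q} :=
  if `[< exists j, w = iter j.+1 pred u >]
  then tperm (branch (iter (jw w) pred u)) (branch (iter (jw w) pred u')) else 1%g.
have pi_ray j : pi (iter j.+1 pred u) (branch (iter j pred u)) = branch (iter j pred u').
  rewrite /pi; case: asboolP => [_|]; last by case; exists j.
  have -> : jw (iter j.+1 pred u) = j by rewrite /jw hor_iter_pred; lia.
  by rewrite tpermL.
exists (relabel u u' pi); split; first exact: relabel_tree_aut.
exact: (relabel_ray pi_ray 0).
Qed.

Section AutInvariance.
Variables (T : V -> V) (d : int).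
Hypothesis TA : tree_aut T d.

Lemma iter_pred_aut n x : iter n pred (T x) = T (iter n pred x).
Proof. by case: TA => _ _ TP _; elim: n => //= n ->; rewrite TP. Qed.

Lemma anc_aut x c : anc pred (T x) (T c) <-> anc pred x c.
Proof.
case: TA => TI _ _ _.
split=> [[n H]|[n H]]; exists n; last by rewrite iter_pred_aut H.
by apply: TI; rewrite -iter_pred_aut.
Qed.

Lemma conf_aut x y c : is_conf pred hor x y c -> is_conf pred hor (T x) (T y) (T c).
Proof.
case: TA => _ TS _ TH [Hx Hy Hm]; split; try by apply/anc_aut.
move=> c'; have [c'' <-] := TS c' => /anc_aut H1 /anc_aut H2.
by rewrite !TH lerD2r; apply: Hm.
Qed.

Lemma set_bij_aut : set_bij [set: V] [set: V] T.
Proof.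
case: TA => TI TS _ _; split => //; first by move=> a b _ _; apply: TI.
by move=> z _; have [v Hv] := TS z; exists v.
Qed.

Variables (R : realType) (p : V -> V -> R).
Hypothesis Hsi : semi_isotropic pred hor p.

Lemma p_aut x y : p (T x) (T y) = p x y.
Proof.
case: TA => _ _ _ TH; have [c Hc] := exists_conf x y.
by symmetry; apply: (Hsi Hc (conf_aut Hc)); rewrite !TH; lia.
Qed.

Lemma pn_aut n x y : pn p n (T x) (T y) = pn p n x y.
Proof.
case: TA => TI _ _ _.
elim: n x y => [|n IH] x y /=.
  case: (boolP `[< x = y >]) => /asboolP H.
    by rewrite H; case: (boolP `[< T y = T y >]) => /asboolP.
  by case: (boolP `[< T x = T y >]) => /asboolP // /TI /H.
rewrite (reindex_esum [set: V] [set: V] T (fun z => (p (T x) z)%:E * pn p n z (T y))%E);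
  last exact: set_bij_aut.
by apply: eq_esum => z _; rewrite p_aut IH.
Qed.

Lemma green_aut x y : green p (T x) (T y) = green p x y.
Proof. by apply: eq_esum => n _; rewrite pn_aut. Qed.

End AutInvariance.

Section MartinLimit.
Variables (o : V) (R : realType) (p : V -> V -> R).
Hypotheses (HP : transition_matrix p) (Hirr : irreducible p).
Hypothesis Hsi : semi_isotropic pred hor p.
Variables (y : nat -> V) (h : V -> R).
Hypothesis Hy : conv_to_end pred o y.
Hypothesis HK : forall x, (fun n => martin p o x (y n)) @ \oo --> h x.

Lemma near_not_anc a : \forall n \near \oo, ~ anc pred (y n) a.
Proof.
have [i [k E]] := pred_connected a o.
have [N HN] := Hy k.
exists N => // n /= Nn [j Hj]; apply: (HN n Nn).
by exists (i + j)%N; rewrite iterD Hj.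
Qed.

Lemma h_hor_invariant x x' : hor x = hor x' -> h x = h x'.
Proof.
move=> hx; have [a [b E]] := pred_connected x x'.
have ab : a = b by have := congr1 hor E; rewrite !hor_iter_pred; lia.
subst a.
have [T [TA Tx Tfix]] := exists_aut_fixing_outside E.
have e : \forall n \near \oo, martin p o x (y n) = martin p o x' (y n).
  near=> n.
  have Hn : ~ anc pred (y n) (iter b pred x) by near: n; apply: near_not_anc.
  have G := green_aut TA Hsi x (y n).
  by rewrite (Tfix _ Hn) in G; rewrite /martin -Tx G.
have : (fun n => martin p o x' (y n)) @ \oo --> h x.
  exact: cvg_trans (near_eq_cvg e) (@HK x).
move=> /(cvg_lim (@Rhausdorff R)) <-.
by rewrite (cvg_lim (@Rhausdorff R) (@HK x')).
Unshelve. all: by end_near.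
Qed.

Lemma h_ge0 x : (0 <= h x)%R.
Proof.
rewrite -(cvg_lim (@Rhausdorff R) (@HK x)); apply: limr_ge; first exact: cvgP (@HK x).
by apply: nearW => n; rewrite divr_ge0 // fine_ge0 // green_ge0.
Qed.

(* When G(o, w) = 0 the Martin kernel is 0 because of the junk value 0^-1 = 0. *)
Lemma martin_superharmonic_fin x (F : set V) w : finite_set F ->
  (\sum_(z <- fset_set F) p x z * martin p o z w <= martin p o x w)%R.
Proof.
move=> finF; set c := fine (green p o w).
have [c0|c0] := eqVneq c 0%R.
  by rewrite /martin -/c c0 invr0 mulr0 big1 // => z _; rewrite !mulr0.
have Go : green p o w \is a fin_num.
  by move: c0; rewrite /c; case: (green p o w) => [r| |] //=; rewrite eqxx.
have Gz z : green p z w \is a fin_num.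
  rewrite ge0_fin_numE ?green_ge0 // ltNge leye_eq; apply/negP => /eqP E.
  by move: Go; rewrite (green_pinfty_propagates HP Hirr o E).
rewrite /martin -/c.
under eq_bigr do rewrite mulrA.
rewrite -mulr_suml; apply: ler_wpM2r; first by rewrite invr_ge0 fine_ge0 // green_ge0.
rewrite -lee_fin -sumEFin fineK ?Gz //.
have -> : (\sum_(z <- fset_set F) (p x z * fine (green p z w))%:E)%E =
     (\sum_(z \in F) (p x z)%:E * green p z w)%E.
  by rewrite fsbig_finite //; apply: eq_bigr => z _; rewrite EFinM fineK ?Gz.
apply: le_trans (green_superharmonic HP x w).
by apply: esum_ge; exists F.
Qed.

Lemma cvg_sum_martin x (s : seq V) :
  (fun n => \sum_(z <- s) p x z * martin p o z (y n))%R @ \oo -->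
  (\sum_(z <- s) p x z * h z)%R.
Proof.
elim: s => [|z s IH].
  rewrite big_nil (_ : (fun n => _) = (fun _ => 0%R)); first exact: cvg_cst.
  by apply: funext => n; rewrite big_nil.
rewrite big_cons (_ : (fun n => _) = (fun n => p x z * martin p o z (y n) +
    \sum_(z <- s) p x z * martin p o z (y n))%R); last first.
  by apply: funext => n; rewrite big_cons.
by apply: cvgD => //; apply: cvgM; [exact: cvg_cst|exact: @HK].
Qed.

Lemma h_superharmonic x : (\esum_(z in [set: V]) (p x z * h z)%:E <= (h x)%:E)%E.
Proof.
apply: ge_ereal_sup => _ [F [finF _] <-].
rewrite fsbig_finite //= sumEFin lee_fin.
have Hc := @cvg_sum_martin x (fset_set F).
rewrite -(cvg_lim (@Rhausdorff R) Hc) -(cvg_lim (@Rhausdorff R) (@HK x)).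
apply: ler_lim; [exact: cvgP Hc|exact: cvgP (@HK x)|].
by apply: nearW => n; apply: martin_superharmonic_fin.
Qed.

Lemma tilde_superharmonic_h (level : int -> V) :
  (forall k, hor (level k) = k) -> tilde_superharmonic hor p o (fun k => h (level k)).
Proof.
move=> Hlevel k; set f := fun k => h (level k).
have [T [TA To]] := exists_aut_shift o (level k).
have fT w : f (hor w - hor o + k) = h (T w).
  by case: TA => _ _ _ TH; apply: h_hor_invariant; rewrite Hlevel TH Hlevel; lia.
pose g w := (p o w * h (T w))%:E.
have g0 w : (0 <= g w)%E by rewrite lee_fin mulr_ge0 ?h_ge0 ?p_ge0.
rewrite (eq_esum (b := fun l => \esum_(w in [set w | hor w - hor o = l - k]) g w));
  last first.
  move=> l _; rewrite /mu_tilde muleC -esumZl ?h_ge0 //; last first.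
    by move=> w; rewrite lee_fin p_ge0.
  apply: eq_esum => w /= Hw; rewrite /g -EFinM mulrC.
  have -> : l = hor w - hor o + k by lia.
  by rewrite -fT.
rewrite esum_esum; last by move=> *; apply: g0.
rewrite (reindex_esum [set: V] _ (fun w => (hor w - hor o + k, w)) (fun kw => g kw.2));
  last first.
  split.
  - by move=> w _; split => //=; lia.
  - by move=> a b _ _ [].
  - by move=> [l w] [_ /= Hw]; exists w => //=; congr pair; lia.
rewrite /g (eq_esum (b := fun w => (p (T o) (T w) * h (T w))%:E));
  last by move=> w _; rewrite (p_aut TA Hsi).
rewrite -(reindex_esum [set: V] [set: V] T (fun z => (p (T o) z * h z)%:E));
  last exact: set_bij_aut TA.
by rewrite To; apply: h_superharmonic.
Qed.

End MartinLimit.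
End Tree.

Unset Implicit Arguments. Set Strict Implicit.

Theorem lemma4p10 (q : nat) (hq : (2 <= q)%N) (R : realType) (V : choiceType)
  (pred : V -> V) (hor : V -> int) (o : V)
  (HT : is_tree_q q pred hor o)
  (p : V -> V -> R)
  (HP : transition_matrix p) (Hirr : irreducible p)
  (Hsi : semi_isotropic pred hor p)
  (y : nat -> V) (h : V -> R)
  (Hy : conv_to_end pred o y)
  (HK : forall x, (fun n => martin p o x (y n)) @ \oo --> h x) :
  exists f : int -> R,
    [/\ (forall k, 0 <= f k), tilde_superharmonic hor p o f &
        forall x, h x = f (hor x)].
Proof.
have [child [branch [pred_child child_inj child_branch]]] := tree_q_children HT.
case: HT => hor_o horE _ pred_connected.
have level_ex k : exists v, hor v = k.
  by rewrite -[k]add0r -hor_o; apply: (hor_surj horE pred_child (Ordinal (ltnW hq))).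
have [level hor_level] := boolp.choice level_ex.
exists (fun k => h (level k)); split.
- by move=> k; apply: (h_ge0 HP HK).
- exact: (tilde_superharmonic_h horE pred_child child_inj child_branch pred_connected
            HP Hirr Hsi Hy HK hor_level).
- move=> x; apply: (h_hor_invariant horE pred_child child_inj child_branch pred_connected
                     Hsi Hy HK).
  by rewrite hor_level.
Qed.
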